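(* Let $\mathcal V=\mathcal V_1\sqcup\mathcal V_{-1}$ be a finite set, $\mathcal E\subseteq\mathcal V_1\times\mathcal V_{-1}$, and $P:\mathcal V\to(0,\infty)$ with $p_v=P(\{v\})$. Then $\mathsf{OptProb}(\mathcal V_1,\mathcal V_{-1},\mathcal E,P)$ terminates and returns a pair $(q,z)$ in which $q$ is the (unique) minimizer of $$\min_{q\in\mathbb R^{\mathcal V}}\sum_{v\in\mathcal V}-p_v\log q_v\quad\text{s.t.}\quad q\ge\mathbf 0,\ Mq\le\mathbf 1,$$ where $M$ is the matrix associated with the bipartite graph $(\mathcal V_1,\mathcal V_{-1},\mathcal E)$.
   Context: For disjoint finite sets $\mathcal A,\mathcal B$, $\mathcal E\subseteq\mathcal A\times\mathcal B$, and weights $P:\mathcal A\cup\mathcal B\to[0,\infty)$ with $P(S)=\sum_{v\in S}P(\{v\})$: $E$ is the edge incidence matrix ($E_{e,w}=1$ if $w$ is an endpoint of $e$, else $0$) and $M=\begin{pmatrix}E\\ I\end{pmatrix}$ with rows indexed by $\mathcal E\sqcup(\mathcal A\cup\mathcal B)$. Define $r\in\mathbb R^{\mathcal A\cup\mathcal B}$: if $P(\mathcal A),P(\mathcal B)>0$, $r_v=P(\{v\})P(\mathcal A\cup\mathcal B)/P(\mathcal A)$ for $v\in\mathcal A$ and $r_v=P(\{v\})P(\mathcal A\cup\mathcal B)/P(\mathcal B)$ for $v\in\mathcal B$; otherwise $r_v=P(\{v\})$. $\mathsf{LinOpt}(\mathcal A,\mathcal B,\mathcal E,P)$ takes an optimal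 $y\in\{0,1\}^{\mathcal A\cup\mathcal B}$ of $\max r^{\top}y$ s.t. $y\ge\mathbf 0$, $My\le\mathbf 1$, and an optimal $z$ of the dual $\min\mathbf 1^{\top}z$ s.t. $z\ge\mathbf 0$, $M^{\top}z\ge r$, and returns $\mathcal A^+=\{v\in\mathcal A:y_v=1\}$, $\mathcal A^-=\mathcal A\setminus\mathcal A^+$, $\mathcal B^+=\{v\in\mathcal B:y_v=1\}$, $\mathcal B^-=\mathcal B\setminus\mathcal B^+$, and $z^{\mathrm{lin}}=z$. $\mathsf{OptProb}(\mathcal A,\mathcal B,\mathcal E,P)$ is the recursive procedure: compute $(\mathcal A^+,\mathcal A^-,\mathcal B^+,\mathcal B^-,z^{\mathrm{lin}})=\mathsf{LinOpt}(\mathcal A,\mathcal B,\mathcal E,P)$. If $P(\mathcal A^+)P(\mathcal B^+)>P(\mathcal A^-)P(\mathcal B^-)$: let $\mathcal E'=\mathcal E\cap(\mathcal A^+\times\mathcal B^-)$, $\mathcal E''=\mathcal E\cap(\mathcal A^-\times\mathcal B^+)$, $(q',z')=\mathsf{OptProb}(\mathcal A^+,\mathcal B^-,\mathcal E',P)$, $(q'',z'')=\mathsf{OptProb}(\mathcal A^-,\mathcal B^+,\mathcal E'',P)$; set $q_v=q'_v$ for $v\in\mathcal A^+\cup\mathcal B^-$ and $q_v=q''_v$ for $v\in\mathcal A^-\cup\mathcal B^+$; set $z_e=z'_e$ for $e\in\mathcal E'\cup\mathcal A^+\cup\mathcal B^-$, $z_e=z''_e$ for $e\in\mathcal E''\cup\mathcal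 A^-\cup\mathcal B^+$, and $z_e=0$ for other $e\in\mathcal E$. Otherwise: set $q_v=P(\mathcal A)/P(\mathcal A\cup\mathcal B)$ for $v\in\mathcal A$, $q_v=P(\mathcal B)/P(\mathcal A\cup\mathcal B)$ for $v\in\mathcal B$, and $z=z^{\mathrm{lin}}$. Return $(q,z)$. The claim holds for any choice of optimal solutions made by $\mathsf{LinOpt}$. *)

From HB Require Import structures.
From mathcomp Require Import all_boot all_order all_algebra.
From mathcomp Require Import all_classical all_reals all_analysis.

Set Implicit Arguments.
Unset Strict Implicit.
Unset Printing Implicit Defensive.

Import Order.TTheory GRing.Theory Num.Theory.
Local Open Scope ring_scope.

(* Conventions: the vertex universe is a finType T; all vertex sets are
   {set T}; vectors in R^S are functions T -> R of which only the values on
   S matter.  The matrix M = (E ; I) of (A,B,E) acts on y : T -> R by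
   (My)_e = sum_{w in A u B, w endpoint of e} y_w  (edge rows) and
   (My)_v = y_v  (identity rows). *)

Section OptProb.
Variables (R : realType) (T : finType).

Definition Pw (P : T -> R) (S : {set T}) : R := \sum_(v in S) P v.

Definition incid (e : T * T) (w : T) : bool := (e.1 == w) || (e.2 == w).

Definition rvec (P : T -> R) (A B : {set T}) (v : T) : R :=
  if (0 < Pw P A) && (0 < Pw P B) then
    (if v \in A then P v * Pw P (A :|: B) / Pw P A
     else P v * Pw P (A :|: B) / Pw P B)
  else P v.

Definition primal_feas (A B : {set T}) (E : {set T * T}) (y : T -> R) : Prop :=
  (forall v, v \in A :|: B -> 0 <= y v) /\
  (forall e, e \in E -> \sum_(w in A :|: B | incid e w) y w <= 1) /\
  (forall v, v \in A :|: B -> y v <= 1).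

Definition primal_obj (P : T -> R) (A B : {set T}) (y : T -> R) : R :=
  \sum_(v in A :|: B) rvec P A B v * y v.

(* z = (zE, zV) in R^(E u (A u B)); z >= 0 and M^T z >= r *)
Definition dual_feas (P : T -> R) (A B : {set T}) (E : {set T * T})
    (zE : T * T -> R) (zV : T -> R) : Prop :=
  (forall e, e \in E -> 0 <= zE e) /\
  (forall v, v \in A :|: B -> 0 <= zV v) /\
  (forall v, v \in A :|: B ->
     rvec P A B v <= \sum_(e in E | incid e v) zE e + zV v).

Definition dual_obj (A B : {set T}) (E : {set T * T})
    (zE : T * T -> R) (zV : T -> R) : R :=
  \sum_(e in E) zE e + \sum_(v in A :|: B) zV v.

Definition linopt (P : T -> R) (A B : {set T}) (E : {set T * T})
    (y : T -> R) (zE : T * T -> R) (zV : T -> R) : Prop :=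
  (forall v, v \in A :|: B -> (y v = 0 \/ y v = 1)) /\
  primal_feas A B E y /\
  (forall y', primal_feas A B E y' -> primal_obj P A B y' <= primal_obj P A B y) /\
  dual_feas P A B E zE zV /\
  (forall zE' zV', dual_feas P A B E zE' zV' ->
     dual_obj A B E zE zV <= dual_obj A B E zE' zV').

Definition plus_part (y : T -> R) (S : {set T}) : {set T} := [set v in S | y v == 1].
Definition minus_part (y : T -> R) (S : {set T}) : {set T} := S :\: plus_part y S.

Definition split_cond (P : T -> R) (A B : {set T}) (y : T -> R) : bool :=
  Pw P (minus_part y A) * Pw P (minus_part y B)
    < Pw P (plus_part y A) * Pw P (plus_part y B).

Definition restrE (E : {set T * T}) (S1 S2 : {set T}) : {set T * T} :=
  E :&: finset.setX S1 S2.

Definition qbase (P : T -> R) (A B : {set T}) (v : T) : R :=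
  if v \in A then Pw P A / Pw P (A :|: B)
  else if v \in B then Pw P B / Pw P (A :|: B) else 0.

(* [optprob P A B E q zE zV]: some run of OptProb(A,B,E,P) (for some choice
   of optimal solutions in the calls to LinOpt) returns (q, (zE,zV)). *)
Inductive optprob (P : T -> R) :
  {set T} -> {set T} -> {set T * T} -> (T -> R) -> (T * T -> R) -> (T -> R) -> Prop :=
| optprob_split A B E y zE zV q1 zE1 zV1 q2 zE2 zV2 :
    linopt P A B E y zE zV ->
    split_cond P A B y ->
    optprob P (plus_part y A) (minus_part y B)
      (restrE E (plus_part y A) (minus_part y B)) q1 zE1 zV1 ->
    optprob P (minus_part y A) (plus_part y B)
      (restrE E (minus_part y A) (plus_part y B)) q2 zE2 zV2 ->
    optprob P A B E
      (fun v => if v \in plus_part y A :|: minus_part y B then q1 v else q2 v)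
      (fun e => if e \in restrE E (plus_part y A) (minus_part y B) then zE1 e
                else if e \in restrE E (minus_part y A) (plus_part y B) then zE2 e
                else 0)
      (fun v => if v \in plus_part y A :|: minus_part y B then zV1 v else zV2 v)
| optprob_base A B E y zE zV :
    linopt P A B E y zE zV ->
    ~~ split_cond P A B y ->
    optprob P A B E (qbase P A B) zE zV.

(* Termination of the nondeterministic procedure: at every call LinOpt has
   an admissible output, and for every admissible output the recursive
   calls (if made) terminate.  Being inductive, this excludes infinite runs. *)
Inductive optprob_terminates (P : T -> R) :
  {set T} -> {set T} -> {set T * T} -> Prop :=
| optprob_term A B E :
    (exists y zE zV, linopt P A B E y zE zV) ->
    (forall y zE zV, linopt P A B E y zE zV -> split_cond P A B y ->
       optprob_terminates P (plus_part y A) (minus_part y B)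
         (restrE E (plus_part y A) (minus_part y B))) ->
    (forall y zE zV, linopt P A B E y zE zV -> split_cond P A B y ->
       optprob_terminates P (minus_part y A) (plus_part y B)
         (restrE E (minus_part y A) (plus_part y B))) ->
    optprob_terminates P A B E.

(* objective sum_v -p_v log q_v, with the value +oo when some q_v <= 0
   (the usual convention -log 0 = +oo; feasibility already gives q >= 0) *)
Definition neglog_obj (P : T -> R) (V : {set T}) (q : T -> R) : \bar R :=
  if [forall v in V, 0 < q v] then (\sum_(v in V) - (P v * ln (q v)))%:E
  else +oo%E.

Definition unique_minimizer (P : T -> R) (A B : {set T}) (E : {set T * T})
    (q : T -> R) : Prop :=
  primal_feas A B E q /\
  (forall q', primal_feas A B E q' ->
     (neglog_obj P (A :|: B) q <= neglog_obj P (A :|: B) q')%E) /\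
  (forall q', primal_feas A B E q' ->
     (neglog_obj P (A :|: B) q' <= neglog_obj P (A :|: B) q)%E ->
     forall v, v \in A :|: B -> q' v = q v).

End OptProb.

From HB Require Import structures.
From mathcomp Require Import all_boot all_order all_algebra.
From mathcomp Require Import all_classical all_reals all_analysis.
From mathcomp Require Import ring lra.

Set Implicit Arguments.
Unset Strict Implicit.
Unset Printing Implicit Defensive.

Import Order.TTheory GRing.Theory Num.Theory.
Import numFieldNormedType.Exports.
Local Open Scope ring_scope.

(* Write V = A :|: B.  LinOpt always has an admissible output: an optimal 0/1
     primal solution exists because any feasible point can be rounded,
     pushing its fractional A- and B-coordinates in opposite directions
     without decreasing the objective ([rounding]); an optimal dual solution
     exists by compactness ([exists_dual]).  When OptProb splits, both
     recursive calls have strictly fewer vertices ([split_card]).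
   - Every output q is a KKT point ([kkt_point]): q > 0, Mq <= 1, and
     sum_v p_v / q_v * q'_v <= P(V) for every feasible q'.  By induction on
     the run ([kkt_optprob]): in the base case p_v / q_v is the LP weight r_v
     and LP optimality applies ([qbase_grad]); in the split case the two
     halves are glued ([kkt_split]), and the only new constraints, on edges
     between unselected vertices, follow from the estimate [side_bound]: a
     Hall-type expansion of ratio rho forces q <= 1/(1 + rho) on the
     expanding side; the expansion itself comes from an exchange argument on
     the optimal 0/1 solution ([hall_split]).
   - A KKT point is the unique minimizer ([kkt_unique_minimizer]), since
     ln x <= x - 1 - (sqrt x - 1)^2.
   The two sides play symmetric roles: [optprob_flip] transfers results from
   one side to the other. *)

Section Instances.
Variables (R : realType) (T : finType) (P : T -> R).

Lemma sum_setU (F : T -> R) (X Y : {set T}) : [disjoint X & Y] ->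
  \sum_(v in X :|: Y) F v = \sum_(v in X) F v + \sum_(v in Y) F v.
Proof. by move=> dXY; rewrite -bigU //; apply: eq_bigl => v; rewrite !inE. Qed.

Lemma Pw_setU (X Y : {set T}) :
  [disjoint X & Y] -> Pw P (X :|: Y) = Pw P X + Pw P Y.
Proof. exact: sum_setU. Qed.

Lemma sum_restrict (S S1 : {set T}) (F : T -> R) : S1 \subset S ->
  \sum_(v in S) (if v \in S1 then F v else 0) = \sum_(v in S1) F v.
Proof.
move=> sS1; rewrite -big_mkcondr /=; apply: eq_bigl => v.
by case vS1: (v \in S1); rewrite ?andbF ?andbT // (fintype.subsetP sS1).
Qed.

Lemma sub_sideA (A B S : {set T}) : S \subset A -> S \subset A :|: B.
Proof. by move=> sSA; apply: fintype.subset_trans sSA (finset.subsetUl A B). Qed.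

Lemma sub_sideB (A B S : {set T}) : S \subset B -> S \subset A :|: B.
Proof. by move=> sSB; apply: fintype.subset_trans sSB (finset.subsetUr A B). Qed.

Definition wf_inst (A B : {set T}) (E : {set T * T}) : Prop :=
  [/\ [disjoint A & B], E \subset finset.setX A B &
      forall v, v \in A :|: B -> 0 < P v].

Section WellFormed.
Variables (A B : {set T}) (E : {set T * T}).
Hypothesis wfAB : wf_inst A B E.

Lemma wf_disjoint : [disjoint A & B].
Proof. by case: wfAB. Qed.

Lemma Pw_ge0 (S : {set T}) : S \subset A :|: B -> 0 <= Pw P S.
Proof.
case: wfAB => _ _ Ppos sS; apply: sumr_ge0 => v vS.
exact/ltW/Ppos/(fintype.subsetP sS).
Qed.

Lemma Pw_sideA_ge0 (S : {set T}) : S \subset A -> 0 <= Pw P S.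
Proof. by move/(sub_sideA B)/Pw_ge0. Qed.

Lemma Pw_sideB_ge0 (S : {set T}) : S \subset B -> 0 <= Pw P S.
Proof. by move/(sub_sideB A)/Pw_ge0. Qed.

Lemma Pw_le (S1 S2 : {set T}) :
  S1 \subset S2 -> S2 \subset A :|: B -> Pw P S1 <= Pw P S2.
Proof.
move=> s12 s2; rewrite /Pw [leRHS](big_setID S1) /= (finset.setIidPr s12) lerDl.
apply: Pw_ge0; apply: fintype.subset_trans s2; exact: finset.subsetDl.
Qed.

Lemma Pw_gt0 (S : {set T}) v : v \in S -> S \subset A :|: B -> 0 < Pw P S.
Proof.
case: wfAB => _ _ Ppos vS sS; rewrite /Pw (bigD1 v) //=.
rewrite ltr_pwDl ?Ppos ?(fintype.subsetP sS) //.
apply: sumr_ge0 => w /andP[wS _]; exact/ltW/Ppos/(fintype.subsetP sS).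
Qed.

Lemma edge_sides e : e \in E -> e.1 \in A /\ e.2 \in B.
Proof.
case: wfAB => _ sE _; case: e => a b /(fintype.subsetP sE).
by rewrite finset.in_setX => /andP[].
Qed.

Lemma edge_sum (F : T -> R) e : e \in E ->
  \sum_(w in A :|: B | incid e w) F w = F e.1 + F e.2.
Proof.
move=> eE; have [e1A e2B] := edge_sides eE.
have e12 : e.1 != e.2 by apply: contraTneq e2B => <-; rewrite (disjointFr wf_disjoint).
rewrite (bigD1 e.1) /=; last by rewrite finset.in_setU e1A /incid eqxx.
rewrite (bigD1 e.2) /=; last by rewrite finset.in_setU e2B orbT /incid eqxx orbT eq_sym.
rewrite big1 ?addr0 // => w /andP[/andP[/andP[_ ew] w1] w2].
by move: ew; rewrite /incid ![_ == w]eq_sym (negbTE w1) (negbTE w2).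
Qed.

Lemma pfeasP (y : T -> R) : primal_feas A B E y <->
  (forall v, v \in A :|: B -> 0 <= y v <= 1) /\
  (forall e, e \in E -> y e.1 + y e.2 <= 1).
Proof.
split.
  case=> y0 [yE y1]; split; first by move=> v vV; rewrite y0 ?y1.
  by move=> e eE; rewrite -(edge_sum y eE); exact: yE.
case=> ybox yE; split; first by move=> v /ybox /andP[].
split; last by move=> v /ybox /andP[].
by move=> e eE; rewrite (edge_sum y eE); exact: yE.
Qed.

Lemma wf_restr (A' B' : {set T}) :
  A' \subset A -> B' \subset B -> wf_inst A' B' (restrE E A' B').
Proof.
case: wfAB => dAB _ Ppos sA sB; split.
- exact: disjointWl sA (disjointWr sB dAB).
- exact: finset.subsetIr.
- by move=> v vV; apply/Ppos/(fintype.subsetP (finset.setUSS sA sB)).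
Qed.

End WellFormed.

Lemma pfeas_restr A B E (A' B' : {set T}) (y : T -> R) :
  wf_inst A B E -> A' \subset A -> B' \subset B -> primal_feas A B E y ->
  primal_feas A' B' (restrE E A' B') y.
Proof.
move=> wfAB sA sB /(pfeasP wfAB)[ybox yE].
apply/(pfeasP (wf_restr wfAB sA sB)); split.
  by move=> v vV; apply/ybox/(fintype.subsetP (finset.setUSS sA sB)).
by move=> e; rewrite inE => /andP[/yE].
Qed.

Lemma restrE_in (E : {set T * T}) (A' B' : {set T}) a b :
  ((a, b) \in restrE E A' B') = [&& (a, b) \in E, a \in A' & b \in B'].
Proof. by rewrite /restrE inE finset.in_setX. Qed.

Section Parts.
Variable y : T -> R.

Lemma in_plus_part (S : {set T}) v : (v \in plus_part y S) = (v \in S) && (y v == 1).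
Proof. by rewrite inE. Qed.

Lemma in_minus_part (S : {set T}) v : (v \in minus_part y S) = (v \in S) && (y v != 1).
Proof. by rewrite !inE; case: (v \in S); case: (y v == 1). Qed.

Lemma plus_sub (S : {set T}) : plus_part y S \subset S.
Proof. by apply/fintype.subsetP => v; rewrite in_plus_part => /andP[]. Qed.

Lemma minus_sub (S : {set T}) : minus_part y S \subset S.
Proof. by apply/fintype.subsetP => v; rewrite in_minus_part => /andP[]. Qed.

Lemma Pw_parts (S : {set T}) :
  Pw P S = Pw P (plus_part y S) + Pw P (minus_part y S).
Proof. by rewrite /Pw (big_setID (plus_part y S)) /= (finset.setIidPr (plus_sub S)). Qed.

Lemma calls_cover (A B : {set T}) :
  A :|: B = (plus_part y A :|: minus_part y B) :|: (minus_part y A :|: plus_part y B).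
Proof.
apply/setP => v; rewrite !finset.in_setU !in_plus_part !in_minus_part.
by case: (v \in A); case: (v \in B); case: (y v == 1).
Qed.

Lemma calls_disjoint (A B : {set T}) : [disjoint A & B] ->
  [disjoint plus_part y A :|: minus_part y B & minus_part y A :|: plus_part y B].
Proof.
move=> dAB; rewrite -setI_eq0; apply/eqP/setP => v.
rewrite !finset.in_setI !finset.in_setU !in_plus_part !in_minus_part finset.in_set0.
case vA: (v \in A); first by rewrite (disjointFr dAB vA); case: (y v == 1).
by case: (v \in B); case: (y v == 1).
Qed.

End Parts.

End Instances.

Section Symmetry.
Variables (R : realType) (T : finType) (P : T -> R).

(* Exchanging the two sides of an instance reverses the orientation of its
   edges; everything in OptProb is invariant under this exchange. *)
Definition flip (e : T * T) : T * T := (e.2, e.1).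
Definition flipE (E : {set T * T}) : {set T * T} := flip @^-1: E.

Lemma flipK : involutive flip. Proof. by case. Qed.

Lemma in_flipE E e : (e \in flipE E) = (flip e \in E). Proof. by rewrite inE. Qed.

Lemma flipEK : involutive flipE.
Proof. by move=> E; apply/setP => e; rewrite !in_flipE flipK. Qed.

Lemma incid_flip e w : incid (flip e) w = incid e w.
Proof. by rewrite /incid orbC. Qed.

Lemma sum_flipE E (F : T * T -> R) :
  \sum_(e in flipE E) F (flip e) = \sum_(e in E) F e.
Proof.
by rewrite [RHS](reindex_inj (can_inj flipK)); apply: eq_bigl => e; rewrite in_flipE.
Qed.

Lemma sum_incid_flipE E (F : T * T -> R) v :
  \sum_(e in flipE E | incid e v) F (flip e) = \sum_(e in E | incid e v) F e.
Proof.
rewrite [RHS](reindex_inj (can_inj flipK)); apply: eq_bigl => e.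
by rewrite in_flipE incid_flip.
Qed.

Lemma restrE_flip E (A' B' : {set T}) :
  restrE (flipE E) B' A' = flipE (restrE E A' B').
Proof.
apply/setP => -[a b]; rewrite in_flipE !restrE_in in_flipE /=.
by case: ((b, a) \in E); case: (a \in B'); case: (b \in A').
Qed.

Lemma wf_flip A B E : wf_inst P A B E -> wf_inst P B A (flipE E).
Proof.
case=> dAB sE Ppos; split.
- by rewrite disjoint_sym.
- apply/fintype.subsetP => -[a b]; rewrite in_flipE => /(fintype.subsetP sE).
  by rewrite !finset.in_setX andbC.
- by move=> v; rewrite finset.setUC; exact: Ppos.
Qed.

Lemma pfeas_flip A B E (y : T -> R) :
  primal_feas A B E y -> primal_feas B A (flipE E) y.
Proof.
rewrite /primal_feas [B :|: A]finset.setUC => -[y0 [yE y1]]; split=> //; split=> // e.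
rewrite in_flipE => /yE; by under eq_bigl => w do rewrite incid_flip.
Qed.

Lemma rvec_flip (A B : {set T}) v : [disjoint A & B] -> v \in A :|: B ->
  rvec P B A v = rvec P A B v.
Proof.
move=> dAB; rewrite /rvec [B :|: A]finset.setUC [(0 < Pw P B) && _]andbC.
rewrite finset.in_setU => /orP[vA|vB].
  by rewrite vA (disjointFr dAB vA).
by rewrite vB (disjointFl dAB vB).
Qed.

Lemma primal_obj_flip (A B : {set T}) (y : T -> R) : [disjoint A & B] ->
  primal_obj P B A y = primal_obj P A B y.
Proof.
move=> dAB; rewrite /primal_obj [B :|: A]finset.setUC.
by apply: eq_bigr => v vV; rewrite rvec_flip.
Qed.

Lemma dual_feas_flip (A B : {set T}) E zE zV : [disjoint A & B] ->
  dual_feas P A B E zE zV -> dual_feas P B A (flipE E) (zE \o flip) zV.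
Proof.
move=> dAB [zE0 [zV0 zcover]]; rewrite /dual_feas [B :|: A]finset.setUC.
split; first by move=> e; rewrite in_flipE => /zE0.
split=> // v vV; rewrite rvec_flip //.
by have := zcover v vV; rewrite -(sum_incid_flipE E zE v).
Qed.

Lemma dual_obj_flip (A B : {set T}) E (zE : T * T -> R) (zV : T -> R) :
  dual_obj B A (flipE E) (zE \o flip) zV = dual_obj A B E zE zV.
Proof. by rewrite /dual_obj -(sum_flipE E zE) [B :|: A]finset.setUC. Qed.

Lemma linopt_flip (A B : {set T}) E y zE zV : [disjoint A & B] ->
  linopt P A B E y zE zV -> linopt P B A (flipE E) y (zE \o flip) zV.
Proof.
move=> dAB [y01 [yfeas [yopt [zfeas zopt]]]].
have dBA : [disjoint B & A] by rewrite disjoint_sym.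
split; first by move=> v; rewrite finset.setUC; exact: y01.
split; first exact: pfeas_flip.
split.
  move=> y' /pfeas_flip; rewrite flipEK => /yopt.
  by rewrite !(primal_obj_flip _ dAB).
split; first exact: dual_feas_flip.
move=> zE' zV' /(dual_feas_flip dBA); rewrite flipEK => /zopt.
by rewrite dual_obj_flip -(dual_obj_flip B A) flipEK.
Qed.

Lemma split_cond_flip (A B : {set T}) (y : T -> R) : split_cond P B A y = split_cond P A B y.
Proof. by rewrite /split_cond mulrC [X in _ < X]mulrC. Qed.

Lemma qbase_flip (A B : {set T}) v : [disjoint A & B] -> v \in A :|: B ->
  qbase P B A v = qbase P A B v.
Proof.
move=> dAB; rewrite /qbase [B :|: A]finset.setUC finset.in_setU => /orP[vA|vB].
  by rewrite vA (disjointFr dAB vA).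
by rewrite vB (disjointFl dAB vB).
Qed.

Lemma optprob_flip A B E q zE zV : optprob P A B E q zE zV -> [disjoint A & B] ->
  exists q' zE' zV', optprob P B A (flipE E) q' zE' zV' /\
    forall v, v \in A :|: B -> q' v = q v.
Proof.
elim=> {A B E q zE zV} [A B E y zE zV q1 zE1 zV1 q2 zE2 zV2 lo ysplit _ IH1 _ IH2
                       | A B E y zE zV lo ynosplit] dAB; last first.
  exists (qbase P B A), (zE \o flip), zV; split; last by move=> v; exact: qbase_flip.
  by apply: optprob_base (linopt_flip dAB lo) _; rewrite split_cond_flip.
have [q1' [zE1' [zV1' [run1 eq1]]]] :=
  IH1 (disjointWl (plus_sub y A) (disjointWr (minus_sub y B) dAB)).
have [q2' [zE2' [zV2' [run2 eq2]]]] :=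
  IH2 (disjointWl (minus_sub y A) (disjointWr (plus_sub y B) dAB)).
rewrite -restrE_flip in run1; rewrite -restrE_flip in run2.
eexists; eexists; eexists; split.
  by apply: optprob_split (linopt_flip dAB lo) _ run2 run1; rewrite split_cond_flip.
move=> v vV /=; rewrite [plus_part y B :|: _]finset.setUC.
case v1: (v \in plus_part y A :|: minus_part y B).
  by rewrite (disjointFr (calls_disjoint y dAB) v1); exact: eq1.
move: vV; rewrite (calls_cover y) finset.in_setU v1 /= => v2.
by rewrite v2; exact: eq2.
Qed.

End Symmetry.

Section Expansion.
Variables (R : realType) (T : finType) (P : T -> R).

Lemma split_plus_pos A B E (y : T -> R) : wf_inst P A B E -> split_cond P A B y ->
  0 < Pw P (plus_part y A) /\ 0 < Pw P (plus_part y B).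
Proof.
move=> wfAB; rewrite /split_cond => ysplit.
have := Pw_sideA_ge0 wfAB (plus_sub y A); have := Pw_sideB_ge0 wfAB (plus_sub y B).
have := Pw_sideA_ge0 wfAB (minus_sub y A); have := Pw_sideB_ge0 wfAB (minus_sub y B).
by move=> *; split; nra.
Qed.

Lemma split_sides_pos A B E (y : T -> R) : wf_inst P A B E -> split_cond P A B y ->
  0 < Pw P A /\ 0 < Pw P B.
Proof.
move=> wfAB ysplit; have [pA pB] := split_plus_pos wfAB ysplit.
rewrite (Pw_parts P y A) (Pw_parts P y B).
have := Pw_sideA_ge0 wfAB (minus_sub y A); have := Pw_sideB_ge0 wfAB (minus_sub y B).
by move=> *; split; lra.
Qed.

Lemma sum_rvecA (A B X : {set T}) : 0 < Pw P A -> 0 < Pw P B -> X \subset A ->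
  \sum_(v in X) rvec P A B v = Pw P X * Pw P (A :|: B) / Pw P A.
Proof.
move=> pA pB sXA; rewrite /Pw !mulr_suml; apply: eq_bigr => v vX.
by rewrite /rvec pA pB (fintype.subsetP sXA v vX).
Qed.

Lemma sum_rvecB (A B X : {set T}) : [disjoint A & B] ->
  0 < Pw P A -> 0 < Pw P B -> X \subset B ->
  \sum_(v in X) rvec P A B v = Pw P X * Pw P (A :|: B) / Pw P B.
Proof.
move=> dAB pA pB sXB; rewrite /Pw !mulr_suml; apply: eq_bigr => v vX.
by rewrite /rvec pA pB (disjointFl dAB (fintype.subsetP sXB v vX)).
Qed.

Definition nbr (E : {set T * T}) (S X : {set T}) : {set T} :=
  [set a in S | [exists b in X, (a, b) \in E]].

Lemma nbrP (E : {set T * T}) (S X : {set T}) a :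
  reflect (a \in S /\ exists2 b, b \in X & (a, b) \in E) (a \in nbr E S X).
Proof.
rewrite inE; apply: (iffP andP) => [[aS /exists_inP[b bX abE]]|[aS [b bX abE]]].
  by split=> //; exists b.
by split=> //; apply/exists_inP; exists b.
Qed.

Lemma nbr_sub (E : {set T * T}) (S X : {set T}) : nbr E S X \subset S.
Proof. by apply/fintype.subsetP => a /nbrP[]. Qed.

Lemma nbr_restr (E : {set T * T}) (S X A' B' : {set T}) : nbr E S X \subset A' -> X \subset B' ->
  nbr E S X \subset nbr (restrE E A' B') A' X.
Proof.
move=> sNA sXB; apply/fintype.subsetP => a aN.
have aA := fintype.subsetP sNA a aN; case/nbrP: aN => _ [b bX abE].
apply/nbrP; split=> //; exists b => //.
by rewrite restrE_in abE aA (fintype.subsetP sXB).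
Qed.

Definition hall_cond (rho : R) (A B : {set T}) (E : {set T * T}) : Prop :=
  forall X : {set T}, X \subset B -> rho * Pw P X <= Pw P (nbr E A X).

Section Exchange.
Variables (A B : {set T}) (E : {set T * T}) (y : T -> R).
Variables (zE : T * T -> R) (zV : T -> R).
Hypotheses (wfAB : wf_inst P A B E) (lo : linopt P A B E y zE zV).

Lemma lo_feas : primal_feas A B E y.
Proof. by case: lo => _ []. Qed.

Lemma lo_opt y' : primal_feas A B E y' -> primal_obj P A B y' <= primal_obj P A B y.
Proof. by case: lo => _ [_ [opt _]]; exact: opt. Qed.

Lemma lo_01 v : v \in A :|: B -> y v != 1 -> y v = 0.
Proof. by case: lo => y01 _ /y01[] -> //; rewrite eqxx. Qed.

Lemma lo_edge e : e \in E -> y e.1 = 1 -> y e.2 = 1 -> False.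
Proof.
move=> eE y1 y2; have [_ /(_ e eE)] := (pfeasP wfAB y).1 lo_feas.
by rewrite y1 y2; lra.
Qed.

Lemma exchange (X Y : {set T}) :
  X \subset A :|: B -> Y \subset A :|: B ->
  (forall v, v \in X -> y v = 0) -> (forall v, v \in Y -> y v = 1) ->
  primal_feas A B E (fun v => if v \in X then 1 else if v \in Y then 0 else y v) ->
  \sum_(v in X) rvec P A B v <= \sum_(v in Y) rvec P A B v.
Proof.
move=> sX sY X0 Y1.
set y' := fun v => if v \in X then 1 else if v \in Y then 0 else y v.
move=> /lo_opt; rewrite /primal_obj.
have -> : \sum_(v in A :|: B) rvec P A B v * y' v =
    \sum_(v in A :|: B) rvec P A B v * y v +
    (\sum_(v in A :|: B) (if v \in X then rvec P A B v else 0) -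
     \sum_(v in A :|: B) (if v \in Y then rvec P A B v else 0)).
  rewrite -sumrB -big_split /=; apply: eq_bigr => v _; rewrite /y'.
  case: ifP => vX.
    have vY : (v \in Y) = false.
      by apply: (contraFF _ (oner_eq0 R)) => /Y1; rewrite X0 // => <-.
    by rewrite vY X0 // mulr1 mulr0 add0r subr0.
  case: ifP => vY; first by rewrite Y1 // mulr0 mulr1 add0r addrN.
  by rewrite subrr addr0.
by rewrite !sum_restrict //; lra.
Qed.

(* Raising a set [X] of unselected [B]-vertices to 1 and lowering their
   selected neighbours to 0 keeps [y] feasible: the other neighbours of [X]
   are at 0 already. *)
Lemma swap_feas (X : {set T}) : X \subset minus_part y B ->
  primal_feas A B E (fun v =>
    if v \in X then 1 else if v \in nbr E (plus_part y A) X then 0 else y v).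
Proof.
move=> sX; have dAB := wf_disjoint wfAB; set N := nbr E (plus_part y A) X.
have sXB : X \subset B := fintype.subset_trans sX (minus_sub y B).
have sNA : N \subset A := fintype.subset_trans (nbr_sub _ _ _) (plus_sub y A).
have [ybox yE] := (pfeasP wfAB y).1 lo_feas.
apply/(pfeasP wfAB); split=> [v /ybox|e eE].
  by case: ifP => _; [|case: ifP => _]; rewrite ?ler01 ?lexx.
have [e1A e2B] := edge_sides wfAB eE.
have e1X : (e.1 \in X) = false.
  by apply: contraTF e1A => /(fintype.subsetP sXB) /(disjointFl dAB) ->.
have e2N : (e.2 \in N) = false.
  by apply: contraTF e2B => /(fintype.subsetP sNA) /(disjointFr dAB) ->.
rewrite e1X e2N; case: ifP => e1N; case: ifP => e2X.
- by rewrite add0r.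
- have e2V : e.2 \in A :|: B by rewrite finset.in_setU e2B orbT.
  by rewrite add0r; case/andP: (ybox _ e2V).
- suff -> : y e.1 = 0 by rewrite add0r.
  apply: lo_01; first by rewrite finset.in_setU e1A.
  apply: contraFN e1N => /eqP y1; apply/nbrP.
  split; first by rewrite in_plus_part e1A y1 eqxx.
  by exists e.2; rewrite // -surjective_pairing.
- exact: yE.
Qed.

(* By the exchange argument, the instance of the first recursive call
   satisfies the Hall condition with ratio P(A)/P(B). *)
Lemma hall_split : 0 < Pw P A -> 0 < Pw P B ->
  hall_cond (Pw P A / Pw P B) (plus_part y A) (minus_part y B)
    (restrE E (plus_part y A) (minus_part y B)).
Proof.
move=> pA pB X sX; have dAB := wf_disjoint wfAB.
set N := nbr E (plus_part y A) X.
have sXB : X \subset B := fintype.subset_trans sX (minus_sub y B).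
have sNA : N \subset A := fintype.subset_trans (nbr_sub _ _ _) (plus_sub y A).
have X0 v : v \in X -> y v = 0.
  move=> /(fintype.subsetP sX); rewrite in_minus_part => /andP[vB]; apply: lo_01.
  by rewrite finset.in_setU vB orbT.
have N1 v : v \in N -> y v = 1 by case/nbrP; rewrite in_plus_part => /andP[_ /eqP].
have := exchange (sub_sideB A sXB) (sub_sideA B sNA) X0 N1 (swap_feas sX).
rewrite (sum_rvecB dAB pA pB sXB) (sum_rvecA pA pB sNA) => hex.
have pW : 0 < Pw P (A :|: B) by rewrite Pw_setU // addr_gt0.
apply: (le_trans _ (Pw_le (wf_restr wfAB (plus_sub y A) (minus_sub y B))
  (nbr_restr (nbr_sub _ _ _) sX) (sub_sideA _ (nbr_sub _ _ _)))).
have -> : Pw P A / Pw P B * Pw P X =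
    (Pw P X * Pw P (A :|: B) / Pw P B) * (Pw P A / Pw P (A :|: B)).
  by field; rewrite !gt_eqF.
have -> : Pw P N = (Pw P N * Pw P (A :|: B) / Pw P A) * (Pw P A / Pw P (A :|: B)).
  by field; rewrite !gt_eqF.
by rewrite ler_wpM2r // divr_ge0 // ltW.
Qed.

End Exchange.

End Expansion.

Section Bounds.
Variables (R : realType) (T : finType) (P : T -> R).

Lemma hall_ratio rho A B E : wf_inst P A B E -> hall_cond P rho A B E ->
  rho * Pw P B <= Pw P A.
Proof.
move=> wfAB hall; apply: le_trans (hall B (fintype.subxx B)) _.
exact: (Pw_le wfAB (nbr_sub E A B) (finset.subsetUl A B)).
Qed.

Lemma hall_weaken rho rho' A B E : wf_inst P A B E -> rho <= rho' ->
  hall_cond P rho' A B E -> hall_cond P rho A B E.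
Proof.
move=> wfAB le_rho hall X sX; apply: le_trans (hall X sX).
exact: (ler_wpM2r (Pw_sideB_ge0 wfAB sX) le_rho).
Qed.

(* The second recursive call inherits the Hall condition: the neighbours of
   selected [B]-vertices are unselected, since [y] is feasible. *)
Lemma hall_plus_side rho A B E y zE zV :
  wf_inst P A B E -> linopt P A B E y zE zV -> hall_cond P rho A B E ->
  hall_cond P rho (minus_part y A) (plus_part y B)
    (restrE E (minus_part y A) (plus_part y B)).
Proof.
move=> wfAB lo hall X sX.
apply: le_trans (hall X (fintype.subset_trans sX (plus_sub y B))) _.
have sNA : nbr E A X \subset minus_part y A.
  apply/fintype.subsetP => a /nbrP[aA [b bX abE]].
  rewrite in_minus_part aA; apply/eqP => ya.
  move: (fintype.subsetP sX b bX); rewrite in_plus_part => /andP[_ /eqP yb].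
  exact: (lo_edge wfAB lo abE ya yb).
exact: (Pw_le (wf_restr wfAB (minus_sub y A) (plus_sub y B)) (nbr_restr sNA sX)
  (sub_sideA _ (nbr_sub _ _ _))).
Qed.

Lemma hall_minus_side rho A B E y zE zV :
  wf_inst P A B E -> linopt P A B E y zE zV -> split_cond P A B y ->
  hall_cond P rho A B E ->
  hall_cond P rho (plus_part y A) (minus_part y B)
    (restrE E (plus_part y A) (minus_part y B)).
Proof.
move=> wfAB lo ysplit hall; have [pA pB] := split_sides_pos wfAB ysplit.
apply: hall_weaken (wf_restr wfAB (plus_sub y A) (minus_sub y B)) _
  (hall_split wfAB lo pA pB).
by rewrite ler_pdivlMr //; exact: hall_ratio wfAB hall.
Qed.

Lemma side_bound A B E q zE zV rho : optprob P A B E q zE zV ->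
  wf_inst P A B E -> hall_cond P rho A B E ->
  forall b, b \in B -> q b * (1 + rho) <= 1.
Proof.
move=> run; elim: run rho => {A B E q zE zV}
  [A B E y zE zV q1 zE1 zV1 q2 zE2 zV2 lo ysplit _ IH1 _ IH2
  | A B E y zE zV lo ynosplit] rho wfAB hall b bB /=;
  have dAB := wf_disjoint wfAB.
  case yb: (y b == 1).
    have -> : (b \in plus_part y A :|: minus_part y B) = false.
      by rewrite finset.in_setU in_plus_part in_minus_part yb (disjointFl dAB bB) andbF.
    apply: (IH2 rho (wf_restr wfAB (minus_sub y A) (plus_sub y B))
      (hall_plus_side wfAB lo hall)).
    by rewrite in_plus_part bB yb.
  have -> : (b \in plus_part y A :|: minus_part y B) = true.
    by rewrite finset.in_setU in_minus_part bB yb orbT.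
  apply: (IH1 rho (wf_restr wfAB (plus_sub y A) (minus_sub y B))
    (hall_minus_side wfAB lo ysplit hall)).
  by rewrite in_minus_part bB yb.
have wA := Pw_sideA_ge0 wfAB (fintype.subxx A).
have pB : 0 < Pw P B := Pw_gt0 wfAB bB (finset.subsetUr A B).
have pW : 0 < Pw P A + Pw P B by rewrite ltr_wpDl.
have ratio := hall_ratio wfAB hall.
by rewrite /qbase (disjointFl dAB bB) bB Pw_setU // mulrAC ler_pdivrMr // mul1r; nra.
Qed.

Lemma add_le1_ratio (x x' a b : R) : 0 < a -> 0 < b ->
  x * (1 + b / a) <= 1 -> x' * (1 + a / b) <= 1 -> x + x' <= 1.
Proof.
move=> pa pb.
have -> : x * (1 + b / a) = x * (a + b) / a by field; rewrite gt_eqF.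
have -> : x' * (1 + a / b) = x' * (a + b) / b by field; rewrite gt_eqF.
rewrite !ler_pdivrMr // !mul1r; nra.
Qed.

(* Across the split, an unselected [A]-vertex and an unselected [B]-vertex
   together receive at most P(A)/P(A :|: B) + P(B)/P(A :|: B) = 1: apply
   [side_bound] to the first recursive call, and to the second one seen from
   its [A]-side through [optprob_flip]. *)
Lemma cross_bound A B E y zE zV q1 zE1 zV1 q2 zE2 zV2 a b :
  wf_inst P A B E -> linopt P A B E y zE zV -> split_cond P A B y ->
  optprob P (plus_part y A) (minus_part y B)
    (restrE E (plus_part y A) (minus_part y B)) q1 zE1 zV1 ->
  optprob P (minus_part y A) (plus_part y B)
    (restrE E (minus_part y A) (plus_part y B)) q2 zE2 zV2 ->
  a \in minus_part y A -> b \in minus_part y B -> q2 a + q1 b <= 1.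
Proof.
move=> wfAB lo ysplit run1 run2 aA bB.
have dAB := wf_disjoint wfAB.
have [pA pB] := split_sides_pos wfAB ysplit.
have qb := side_bound run1 (wf_restr wfAB (plus_sub y A) (minus_sub y B))
  (hall_split wfAB lo pA pB) bB.
have [q2' [zE2' [zV2' [run2' q2E]]]] :=
  optprob_flip run2 (disjointWl (minus_sub y A) (disjointWr (plus_sub y B) dAB)).
rewrite -restrE_flip in run2'.
have wfF := wf_flip wfAB.
have qa := side_bound run2' (wf_restr wfF (plus_sub y B) (minus_sub y A))
  (hall_split wfF (linopt_flip dAB lo) pB pA) aA.
rewrite q2E ?finset.in_setU ?aA // in qa.
exact: add_le1_ratio pA pB qa qb.
Qed.

End Bounds.

Section Stationarity.
Variables (R : realType) (T : finType) (P : T -> R).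

(* [q] is a strictly positive feasible point satisfying the first-order
   optimality condition of  min - sum_v p_v ln q_v  over the feasible
   polytope: the gradient (p_v / q_v)_v pairs with every feasible [q'] to at
   most its pairing P(A :|: B) with [q] itself. *)
Definition kkt_point (A B : {set T}) (E : {set T * T}) (q : T -> R) : Prop :=
  [/\ forall v, v \in A :|: B -> 0 < q v, primal_feas A B E q &
      forall q', primal_feas A B E q' ->
        \sum_(v in A :|: B) P v / q v * q' v <= Pw P (A :|: B)].

(* Gluing the outputs of the two recursive calls: the only edges not covered
   by a recursive call join two unselected vertices, and are controlled by
   [cross_bound]. *)
Lemma kkt_split A B E y zE zV q1 q2 :
  wf_inst P A B E -> linopt P A B E y zE zV ->
  kkt_point (plus_part y A) (minus_part y B)
    (restrE E (plus_part y A) (minus_part y B)) q1 ->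
  kkt_point (minus_part y A) (plus_part y B)
    (restrE E (minus_part y A) (plus_part y B)) q2 ->
  (forall a b, a \in minus_part y A -> b \in minus_part y B -> q2 a + q1 b <= 1) ->
  kkt_point A B E
    (fun v => if v \in plus_part y A :|: minus_part y B then q1 v else q2 v).
Proof.
move=> wfAB lo [pos1 feas1 grad1] [pos2 feas2 grad2] cross.
have dAB := wf_disjoint wfAB.
have wf1 := wf_restr wfAB (plus_sub y A) (minus_sub y B).
have wf2 := wf_restr wfAB (minus_sub y A) (plus_sub y B).
have [box1 edge1] := (pfeasP wf1 q1).1 feas1.
have [box2 edge2] := (pfeasP wf2 q2).1 feas2.
have notV1 := disjointFl (calls_disjoint y dAB).
split.
- move=> v; rewrite (calls_cover y) finset.in_setU => /orP[v1|v2] /=.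
    by rewrite v1; exact: pos1.
  by rewrite notV1 //; exact: pos2.
- apply/(pfeasP wfAB); split.
    move=> v; rewrite (calls_cover y) finset.in_setU => /orP[v1|v2] /=.
      by rewrite v1; exact: box1.
    by rewrite notV1 //; exact: box2.
  move=> [a b] abE; have [/= aA bB] := edge_sides wfAB abE.
  rewrite /= !finset.in_setU !in_plus_part !in_minus_part aA bB.
  rewrite (disjointFl dAB bB) (disjointFr dAB aA) /= orbF.
  case ya: (y a == 1); case yb: (y b == 1) => /=.
  + by case: (lo_edge wfAB lo abE (eqP ya) (eqP yb)).
  + by apply: (edge1 (a, b)); rewrite restrE_in abE in_plus_part in_minus_part aA bB ya yb.
  + by apply: (edge2 (a, b)); rewrite restrE_in abE in_plus_part in_minus_part aA bB ya yb.
  + by apply: cross; rewrite in_minus_part ?aA ?bB ?ya ?yb.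
- move=> q' feas'; have dV := calls_disjoint y dAB.
  rewrite (calls_cover y) (sum_setU _ dV) (Pw_setU _ dV).
  apply: lerD.
    under eq_bigr => v v1 do rewrite /= v1.
    apply: grad1; exact: (pfeas_restr wfAB (plus_sub y A) (minus_sub y B) feas').
  under eq_bigr => v v2 do rewrite /= notV1 //.
  apply: grad2; exact: (pfeas_restr wfAB (minus_sub y A) (plus_sub y B) feas').
Qed.

Lemma frac_sum_le (a a' b b' W : R) : 0 <= a -> 0 <= a' -> 0 <= b -> 0 <= b' ->
  0 < a + a' -> 0 < b + b' -> a * b <= a' * b' -> 0 < W ->
  a * W / (a + a') + b * W / (b + b') <= W.
Proof.
move=> a0 a'0 b0 b'0 pA pB hab pW.
have -> : a * W / (a + a') + b * W / (b + b') =
    W * ((a * (b + b') + b * (a + a')) / ((a + a') * (b + b'))).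
  by field; rewrite !gt_eqF.
apply: ler_piMr; first exact: ltW.
rewrite ler_pdivrMr ?mulr_gt0 //; nra.
Qed.

Lemma qbase_rvec (A B : {set T}) v : [disjoint A & B] ->
  0 < Pw P A -> 0 < Pw P B -> v \in A :|: B -> P v / qbase P A B v = rvec P A B v.
Proof.
move=> dAB pA pB; have pW : 0 < Pw P (A :|: B) by rewrite Pw_setU // addr_gt0.
rewrite /rvec pA pB /qbase finset.in_setU => /orP[vA|vB].
  by rewrite vA; field; rewrite !gt_eqF.
by rewrite (disjointFl dAB vB) vB; field; rewrite !gt_eqF.
Qed.

Lemma qbase_one_sided A B E v : wf_inst P A B E ->
  ~~ ((0 < Pw P A) && (0 < Pw P B)) -> v \in A :|: B -> qbase P A B v = 1.
Proof.
move=> wfAB onesided; have dAB := wf_disjoint wfAB.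
have wA := Pw_sideA_ge0 wfAB (fintype.subxx A).
have wB := Pw_sideB_ge0 wfAB (fintype.subxx B).
rewrite /qbase Pw_setU // finset.in_setU => /orP[vA|vB].
  have pA := Pw_gt0 wfAB vA (finset.subsetUl A B).
  move: onesided; rewrite pA /= -leNgt => wB0.
  rewrite vA (_ : Pw P B = 0) ?addr0 ?divff ?gt_eqF //.
  by apply/le_anti; rewrite wB0 wB.
have pB := Pw_gt0 wfAB vB (finset.subsetUr A B).
move: onesided; rewrite pB andbT -leNgt => wA0.
rewrite (disjointFl dAB vB) vB (_ : Pw P A = 0) ?add0r ?divff ?gt_eqF //.
by apply/le_anti; rewrite wA0 wA.
Qed.

Lemma lp_value_nosplit A B E y zE zV :
  wf_inst P A B E -> linopt P A B E y zE zV -> ~~ split_cond P A B y ->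
  0 < Pw P A -> 0 < Pw P B -> primal_obj P A B y <= Pw P (A :|: B).
Proof.
move=> wfAB [y01 _] ynosplit pA pB; have dAB := wf_disjoint wfAB.
have pW : 0 < Pw P (A :|: B) by rewrite Pw_setU // addr_gt0.
have -> : primal_obj P A B y =
    \sum_(v in plus_part y A :|: plus_part y B) rvec P A B v.
  rewrite -(sum_restrict _ (finset.setUSS (plus_sub y A) (plus_sub y B))).
  apply: eq_bigr => v vV; rewrite finset.in_setU !in_plus_part.
  case: (y01 v vV) => ->; first by rewrite mulr0 eq_sym oner_eq0 !andbF.
  by rewrite mulr1 eqxx !andbT -finset.in_setU vV.
rewrite sum_setU; last exact: disjointWl (plus_sub y A) (disjointWr (plus_sub y B) dAB).
rewrite (sum_rvecA pA pB (plus_sub y A)) (sum_rvecB dAB pA pB (plus_sub y B)).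
rewrite (Pw_parts P y A) (Pw_parts P y B) in pA pB *.
apply: frac_sum_le => //; last by rewrite leNgt.
- exact: (Pw_sideA_ge0 wfAB (plus_sub y A)).
- exact: (Pw_sideA_ge0 wfAB (minus_sub y A)).
- exact: (Pw_sideB_ge0 wfAB (plus_sub y B)).
- exact: (Pw_sideB_ge0 wfAB (minus_sub y B)).
Qed.

Lemma qbase_grad A B E y zE zV :
  wf_inst P A B E -> linopt P A B E y zE zV -> ~~ split_cond P A B y ->
  forall q', primal_feas A B E q' ->
    \sum_(v in A :|: B) P v / qbase P A B v * q' v <= Pw P (A :|: B).
Proof.
move=> wfAB lo ynosplit q' feas'.
case: (boolP ((0 < Pw P A) && (0 < Pw P B))) => [/andP[pA pB]|onesided].
  under eq_bigr => v vV do rewrite qbase_rvec ?(wf_disjoint wfAB) //.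
  exact: le_trans (lo_opt lo feas') (lp_value_nosplit wfAB lo ynosplit pA pB).
have [_ _ Ppos] := wfAB; have [qbox _] := (pfeasP wfAB q').1 feas'.
rewrite /Pw; apply: ler_sum => v vV; rewrite (qbase_one_sided wfAB) // divr1.
by apply: ler_piMr; [exact/ltW/Ppos | case/andP: (qbox v vV)].
Qed.

Lemma kkt_base A B E y zE zV :
  wf_inst P A B E -> linopt P A B E y zE zV -> ~~ split_cond P A B y ->
  kkt_point A B E (qbase P A B).
Proof.
move=> wfAB lo ynosplit; have dAB := wf_disjoint wfAB.
have wA := Pw_sideA_ge0 wfAB (fintype.subxx A).
have wB := Pw_sideB_ge0 wfAB (fintype.subxx B).
have qA v : v \in A -> qbase P A B v = Pw P A / (Pw P A + Pw P B).
  by move=> vA; rewrite /qbase vA Pw_setU.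
have qB v : v \in B -> qbase P A B v = Pw P B / (Pw P A + Pw P B).
  by move=> vB; rewrite /qbase (disjointFl dAB vB) vB Pw_setU.
have qbox v : v \in A :|: B -> 0 < qbase P A B v <= 1.
  rewrite finset.in_setU => /orP[vA|vB].
    have pA := Pw_gt0 wfAB vA (finset.subsetUl A B).
    have pW : 0 < Pw P A + Pw P B by lra.
    by rewrite qA // divr_gt0 //= ler_pdivrMr // mul1r lerDl.
  have pB := Pw_gt0 wfAB vB (finset.subsetUr A B).
  have pW : 0 < Pw P A + Pw P B by lra.
  by rewrite qB // divr_gt0 //= ler_pdivrMr // mul1r lerDr.
split; last exact: qbase_grad wfAB lo ynosplit.
  by move=> v /qbox /andP[].
apply/(pfeasP wfAB); split; first by move=> v /qbox /andP[/ltW ->].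
move=> e eE; have [e1A e2B] := edge_sides wfAB eE.
have pA := Pw_gt0 wfAB e1A (finset.subsetUl A B).
by rewrite qA // qB // -mulrDl divff // gt_eqF //; lra.
Qed.

Lemma kkt_optprob A B E q zE zV : optprob P A B E q zE zV ->
  wf_inst P A B E -> kkt_point A B E q.
Proof.
elim=> {A B E q zE zV} [A B E y zE zV q1 zE1 zV1 q2 zE2 zV2 lo ysplit run1 IH1 run2 IH2
                       | A B E y zE zV lo ynosplit] wfAB; last exact: kkt_base wfAB lo ynosplit.
apply: (kkt_split wfAB lo (IH1 (wf_restr wfAB (plus_sub y A) (minus_sub y B)))
  (IH2 (wf_restr wfAB (minus_sub y A) (plus_sub y B)))).
by move=> a b aA bB; exact: (cross_bound wfAB lo ysplit run1 run2 aA bB).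
Qed.

End Stationarity.

Section Optimality.
Variables (R : realType) (T : finType) (P : T -> R).

(* A quantitative form of ln x <= x - 1, obtained by applying it to sqrt x. *)
Lemma ln_le_sqrt_gap (x : R) : 0 < x -> ln x <= x - 1 - (Num.sqrt x - 1) ^+ 2.
Proof.
move=> px; have psx : 0 < Num.sqrt x by rewrite sqrtr_gt0.
have sq : Num.sqrt x ^+ 2 = x by rewrite sqr_sqrtr // ltW.
have lnsx : ln (Num.sqrt x) <= Num.sqrt x - 1.
  by have := @le_ln1Dx R (Num.sqrt x - 1); rewrite [1 + _]addrC subrK; apply; lra.
rewrite -{1}sq lnXn // mulr2n; nra.
Qed.

Lemma neglog_tangent (p a b : R) : 0 <= p -> 0 < a -> 0 < b ->
  - (p * ln a) + p * (Num.sqrt (b / a) - 1) ^+ 2 <= - (p * ln b) + (p / a * b - p).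
Proof.
move=> p0 pa pb; have pba : 0 < b / a by exact: divr_gt0.
have gap := ler_wpM2l p0 (ln_le_sqrt_gap pba).
rewrite ln_div ?posrE // in gap.
rewrite mulrAC -mulrA; nra.
Qed.

Lemma kkt_gap A B E q q' : wf_inst P A B E -> kkt_point P A B E q ->
  primal_feas A B E q' -> (forall v, v \in A :|: B -> 0 < q' v) ->
  \sum_(v in A :|: B) - (P v * ln (q v)) +
  \sum_(v in A :|: B) P v * (Num.sqrt (q' v / q v) - 1) ^+ 2 <=
  \sum_(v in A :|: B) - (P v * ln (q' v)).
Proof.
move=> [_ _ Ppos] [qpos _ grad] feas' q'pos.
rewrite -big_split /=; apply: le_trans (ler_sum _ (fun v vV =>
  neglog_tangent (ltW (Ppos v vV)) (qpos v vV) (q'pos v vV))) _.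
by rewrite big_split /= sumrB; have := grad q' feas'; rewrite /Pw; lra.
Qed.

Lemma kkt_unique_minimizer A B E q : wf_inst P A B E -> kkt_point P A B E q ->
  unique_minimizer P A B E q.
Proof.
move=> wfAB kkt; have [qpos qfeas _] := kkt; have [_ _ Ppos] := wfAB.
have objq : neglog_obj P (A :|: B) q = (\sum_(v in A :|: B) - (P v * ln (q v)))%:E.
  by rewrite /neglog_obj; case: forall_inP => // - [].
have gap0 q' : 0 <= \sum_(v in A :|: B) P v * (Num.sqrt (q' v / q v) - 1) ^+ 2.
  by apply: sumr_ge0 => v vV; rewrite mulr_ge0 ?sqr_ge0 ?ltW ?Ppos.
split=> //; split=> q' feas'; rewrite objq /neglog_obj.
  case: forall_inP => [q'pos|_]; last by rewrite leey.
  by rewrite lee_fin; have := kkt_gap wfAB kkt feas' q'pos; have := gap0 q'; lra.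
case: forall_inP => [q'pos|_]; last by rewrite leNgt ltey.
rewrite lee_fin => le_obj v vV; have := kkt_gap wfAB kkt feas' q'pos.
move=> hgap; have gap_eq0 : \sum_(v in A :|: B) P v * (Num.sqrt (q' v / q v) - 1) ^+ 2 = 0.
  by apply/le_anti; rewrite gap0 andbT; lra.
have /eqP := psumr_eq0P (fun w wV => mulr_ge0 (ltW (Ppos w wV)) (sqr_ge0 _)) gap_eq0 vV.
rewrite mulf_eq0 (gt_eqF (Ppos v vV)) sqrf_eq0 subr_eq0 => /eqP sqrt1.
have : q' v / q v = 1.
  by rewrite -(@sqr_sqrtr _ (q' v / q v)) ?sqrt1 ?expr1n // ltW // divr_gt0 ?qpos ?q'pos.
have qv0 : q v != 0 by rewrite gt_eqF ?qpos.
by move=> ratio1; rewrite -(divfK qv0 (q' v)) ratio1 mul1r.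
Qed.

End Optimality.

Section Rounding.
Variables (R : realType) (T : finType) (P : T -> R).
Variables (A B : {set T}) (E : {set T * T}).
Hypothesis wfAB : wf_inst P A B E.

Definition ind (S : {set T}) : T -> R := fun v => if v \in S then 1 else 0.

Definition frac_part (y : T -> R) : {set T} := [set v in A :|: B | 0 < y v < 1].

Lemma in_frac_part y v : (v \in frac_part y) = (v \in A :|: B) && (0 < y v < 1).
Proof. by rewrite inE. Qed.

Lemma pfeas_eq_on (y1 y2 : T -> R) : (forall v, v \in A :|: B -> y1 v = y2 v) ->
  primal_feas A B E y1 -> primal_feas A B E y2.
Proof.
move=> y12 [y0 [yE y1le]]; split; first by move=> v vV; rewrite -y12 ?y0.
split; last by move=> v vV; rewrite -y12 ?y1le.
move=> e eE; under eq_bigr => v /andP[vV _] do rewrite -y12 //.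
exact: yE.
Qed.

(* Moving along a direction [d] supported on the fractional coordinates, with
   opposite signs at the two ends of every fractional edge, keeps
   feasibility as long as the box constraints hold: an edge with one
   fractional end has its other end at 0. *)
Lemma perturb_feas (y d : T -> R) : primal_feas A B E y ->
  (forall v, v \notin frac_part y -> d v = 0) ->
  (forall e, e \in E -> e.1 \in frac_part y -> e.2 \in frac_part y -> d e.1 + d e.2 = 0) ->
  (forall v, v \in A :|: B -> 0 <= y v + d v <= 1) ->
  primal_feas A B E (fun v => y v + d v).
Proof.
move=> /(pfeasP wfAB)[ybox yE] dsupp dedge dbox.
apply/(pfeasP wfAB); split=> // e eE; have [e1A e2B] := edge_sides wfAB eE.
have e1V : e.1 \in A :|: B by rewrite finset.in_setU e1A.
have e2V : e.2 \in A :|: B by rewrite finset.in_setU e2B orbT.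
have := yE e eE; have := dbox _ e1V; have := dbox _ e2V.
have := ybox _ e1V; have := ybox _ e2V.
case F1: (e.1 \in frac_part y); case F2: (e.2 \in frac_part y).
- by have := dedge e eE F1 F2; lra.
- rewrite (dsupp e.2) ?F2 //; move: F1 F2; rewrite !in_frac_part e1V e2V /=.
  by move=> /andP[] ? ? /negbT; rewrite negb_and -!leNgt => /orP[]; lra.
- rewrite (dsupp e.1) ?F1 //; move: F1 F2; rewrite !in_frac_part e1V e2V /=.
  by move=> /negbT; rewrite negb_and -!leNgt => /orP[] ? /andP[]; lra.
- by rewrite (dsupp e.1) ?F1 // (dsupp e.2) ?F2 //; lra.
Qed.

Definition tilt (r : T -> R) (F : {set T}) : R :=
  \sum_(v in F) r v * (if v \in A then 1 else -1).

(* The rounding direction on [F]: opposite signs on the two sides, oriented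
   so that [r] does not decrease along it. *)
Definition round_up (r : T -> R) (F : {set T}) (v : T) : bool :=
  (v \in A) == (0 <= tilt r F).

Definition round_dir (r : T -> R) (F : {set T}) (v : T) : R :=
  if v \in F then (if round_up r F v then 1 else -1) else 0.

Lemma round_dir_gain (r : T -> R) (F : {set T}) : F \subset A :|: B ->
  \sum_(v in A :|: B) r v * round_dir r F v = `|tilt r F|.
Proof.
move=> sF; rewrite /round_dir /round_up.
under eq_bigr => v _ do rewrite (fun_if ( *%R (r v))) mulr0.
rewrite sum_restrict //; have [t0|t0] := lerP 0 (tilt r F).
  by rewrite ger0_norm //; apply: eq_bigr => v _; case: (v \in A).
rewrite ltr0_norm // /tilt -sumrN; apply: eq_bigr => v _.
by case: (v \in A); rewrite /= ?mulrN ?mulr1 ?opprK.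
Qed.

(* One rounding step: move along [round_dir] until a first fractional
   coordinate becomes integral. *)
Lemma rounding_step (r y : T -> R) : primal_feas A B E y -> frac_part y != finset.set0 ->
  exists y2, [/\ primal_feas A B E y2,
    \sum_(v in A :|: B) r v * y v <= \sum_(v in A :|: B) r v * y2 v &
    (#|frac_part y2| < #|frac_part y|)%N].
Proof.
move=> feas Fn; have [ybox _] := (pfeasP wfAB y).1 feas.
set F := frac_part y; set up := round_up r F.
have sF : F \subset A :|: B by apply/fintype.subsetP => v; rewrite in_frac_part => /andP[].
have inF v : v \in F -> 0 < y v < 1 by rewrite in_frac_part => /andP[].
pose slack v := if up v then 1 - y v else y v.
have [x xF] := finset.set0Pn _ Fn.
have [v0 v0F v0min] := @arg_minP _ _ T x (mem F) slack xF.
have {}v0F : v0 \in F := v0F.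
pose theta := slack v0.
have theta_gt0 : 0 < theta by have := inF v0 v0F; rewrite /theta /slack; case: ifP; lra.
exists (fun v => y v + theta * round_dir r F v); split.
- apply: perturb_feas => //.
  + by move=> v /negbTE vF; rewrite /round_dir vF mulr0.
  + move=> e eE F1 F2; have [e1A e2B] := edge_sides wfAB eE.
    rewrite /round_dir F1 F2 -/up /up /round_up e1A.
    rewrite (disjointFl (wf_disjoint wfAB) e2B) -mulrDr.
    by case: (0 <= tilt r F) => /=; rewrite ?addrN ?addNr mulr0.
  + move=> v vV; rewrite /round_dir; case vF: (v \in F); last first.
      by rewrite mulr0 addr0 ybox.
    have := v0min v vF; have := inF v vF; rewrite -/theta /slack -/up.
    by case: (up v); rewrite ?mulr1 ?mulrN1; lra.
- under [X in _ <= X]eq_bigr => v _ do rewrite mulrDr mulrCA.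
  by rewrite big_split /= -mulr_sumr round_dir_gain // lerDl mulr_ge0 // ltW.
- apply: proper_card; apply/properP; split.
    apply/fintype.subsetP => v; rewrite in_frac_part /round_dir; case vF: (v \in F).
      by rewrite -vF => _.
    by rewrite mulr0 addr0 -in_frac_part -/F vF.
  exists v0 => //; rewrite in_frac_part negb_and; apply/orP; right.
  by rewrite /round_dir v0F /theta /slack -/up; case: (up v0); apply/negP => /andP[]; lra.
Qed.

Lemma rounding (r y : T -> R) : primal_feas A B E y ->
  exists2 S : {set T}, primal_feas A B E (ind S) &
    \sum_(v in A :|: B) r v * y v <= \sum_(v in A :|: B) r v * ind S v.
Proof.
elim: {y}_.+1 {-2}y (ltnSn #|frac_part y|) => // n IH y lt_frac feas.
case: (eqVneq (frac_part y) finset.set0) => [F0|Fn]; last first.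
  have [y2 [feas2 le2 lt2]] := rounding_step r feas Fn.
  have [S feasS leS] := IH y2 (leq_trans lt2 lt_frac) feas2.
  by exists S => //; apply: le_trans le2 leS.
have [ybox _] := (pfeasP wfAB y).1 feas.
pose S := [set v in A :|: B | y v == 1].
have yS v : v \in A :|: B -> y v = ind S v.
  move=> vV; have := ybox v vV; have : v \notin frac_part y by rewrite F0 finset.in_set0.
  rewrite /ind /S in_frac_part vV finset.in_set vV /= negb_and -!leNgt.
  by case: eqP => [//|ne] /orP[] ? /andP[] ? ?; [lra | case: ne; lra].
exists S; first exact: pfeas_eq_on yS feas.
by under eq_bigr => v vV do rewrite yS //.
Qed.

End Rounding.

Lemma box_min (R : realType) (n : nat) (M : R) (Phi : 'rV[R]_n -> R) :
  0 <= M -> continuous Phi ->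
  exists2 c : 'rV[R]_n, (forall i, 0 <= c ord0 i <= M) &
    forall z : 'rV[R]_n, (forall i, 0 <= z ord0 i <= M) -> Phi c <= Phi z.
Proof.
move=> M0 cPhi.
pose box := [set z : 'rV[R]_n | forall i, `[0, M]%classic (z ord0 i)]%classic.
have cbox : compact box by exact: rV_compact (fun=> @segment_compact _ 0 M).
have box0 : (box !=set0)%classic.
  by exists 0 => i /=; rewrite mxE in_itv /= lexx M0.
have [c cB cmin] := compact_EVT_min box0 cbox (continuous_subspaceT cPhi).
exists c => [i|z zB]; first by move: cB; rewrite inE => /(_ i) /=; rewrite in_itv.
by apply: cmin; rewrite inE => i /=; rewrite in_itv zB.
Qed.

Section DualExistence.
Variables (R : realType) (T : finType) (P : T -> R).
Variables (A B : {set T}) (E : {set T * T}).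
Hypothesis wfAB : wf_inst P A B E.

Lemma rvec_ge0 v : v \in A :|: B -> 0 <= rvec P A B v.
Proof.
move=> vV; have [_ _ Ppos] := wfAB; have pv := ltW (Ppos v vV).
have pW := Pw_ge0 wfAB (fintype.subxx (A :|: B)).
rewrite /rvec; case: ifP => [/andP[pA pB]|_] //.
by case: ifP => _; rewrite divr_ge0 ?mulr_ge0 // ltW.
Qed.

Definition vertex_dual (zE : T * T -> R) (v : T) : R :=
  Num.max 0 (rvec P A B v - \sum_(e in E | incid e v) zE e).

Lemma vertex_dual_feas zE : (forall e, e \in E -> 0 <= zE e) ->
  dual_feas P A B E zE (vertex_dual zE).
Proof.
move=> zE0; split=> //; split=> v _; rewrite /vertex_dual ?le_max ?lexx //.
by rewrite -lerBlDl le_max lexx orbT.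
Qed.

Definition dual_value (zE : T * T -> R) : R := dual_obj A B E zE (vertex_dual zE).

Definition clip (M : R) (zE : T * T -> R) (e : T * T) : R :=
  Num.min (Num.max 0 (zE e)) M.

(* No edge variable needs to exceed M = sum_v r_v: clipping the edge part of
   a dual feasible vector to [0, M] and completing it optimally does not
   increase the dual objective. *)
Lemma dual_value_clip zE zV : dual_feas P A B E zE zV ->
  dual_value (clip (\sum_(v in A :|: B) rvec P A B v) zE) <= dual_obj A B E zE zV.
Proof.
move=> [zE0 [zV0 zcover]]; set M := \sum_(v in A :|: B) _.
have M0 : 0 <= M by apply: sumr_ge0 => v; exact: rvec_ge0.
have rM v : v \in A :|: B -> rvec P A B v <= M.
  move=> vV; rewrite /M (bigD1 v) //= lerDl.
  by apply: sumr_ge0 => w /andP[wV _]; exact: rvec_ge0.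
have clip_ge0 e : 0 <= clip M zE e by rewrite /clip le_min le_max lexx M0.
rewrite /dual_value /dual_obj; apply: lerD.
  by apply: ler_sum => e eE; rewrite /clip ge_min ge_max lexx zE0.
apply: ler_sum => v vV; rewrite /vertex_dual ge_max zV0 //=.
case: (boolP [forall e in E, incid e v ==> (zE e <= M)]) => [/forall_inP small|].
  rewrite (eq_bigr zE); first by have := zcover v vV; lra.
  move=> e /andP[eE ev]; have := small e eE; rewrite ev /= => le_M.
  by rewrite /clip (max_r (zE0 e eE)) (min_l le_M).
rewrite negb_forall_in => /existsP[e /andP[eE]]; rewrite negb_imply -ltNge.
move=> /andP[ev big_e].
have M_le : M <= \sum_(e in E | incid e v) clip M zE e.
  rewrite (bigD1 e) /=; last by rewrite eE ev.
  rewrite {1}(_ : M = clip M zE e) ?lerDl; last first.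
    by rewrite /clip (max_r (zE0 e eE)) (min_r (ltW big_e)).
  by apply: sumr_ge0 => e' _; exact: clip_ge0.
by have := rM v vV; have := zV0 v vV; lra.
Qed.

(* The dual LP attains its minimum: minimise [dual_value] over a box of
   edge parts, by compactness. *)
Lemma exists_dual : exists zE zV, dual_feas P A B E zE zV /\
  forall zE' zV', dual_feas P A B E zE' zV' ->
    dual_obj A B E zE zV <= dual_obj A B E zE' zV'.
Proof.
set M := \sum_(v in A :|: B) rvec P A B v.
have M0 : 0 <= M by apply: sumr_ge0 => v; exact: rvec_ge0.
pose edges (z : 'rV[R]_#|{: T * T}|) (e : T * T) := z ord0 (enum_rank e).
have cont : continuous (fun z => dual_value (edges z)).
  have csum (Q : pred (T * T)) :
      continuous (fun z : 'rV[R]_#|{: T * T}| => \sum_(e | Q e) edges z e).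
    by apply: (continuous_big add_continuous) => e _; exact: coord_continuous.
  move=> z; apply: continuousD; first exact: csum.
  apply: (continuous_big add_continuous) => v _ w.
  apply: (@continuous_max _ _ (fun=> 0)
    (fun z => rvec P A B v - \sum_(e in E | incid e v) edges z e) w).
    exact: cst_continuous.
  by apply: continuousB; [exact: cst_continuous | exact: csum].
have [c cbox cmin] := box_min M0 cont.
exists (edges c), (vertex_dual (edges c)); split.
  by apply: vertex_dual_feas => e _; case/andP: (cbox (enum_rank e)).
move=> zE' zV' feas'; apply: (le_trans _ (dual_value_clip feas')).
pose c' : 'rV[R]_#|{: T * T}| := \row_i clip M zE' (enum_val i).
have -> : clip M zE' = edges c' by apply/funext => e; rewrite /edges mxE enum_rankK.
by apply: cmin => i; rewrite mxE /clip le_min ge_min le_max !lexx M0 orbT.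
Qed.

End DualExistence.

Section Termination.
Variables (R : realType) (T : finType) (P : T -> R).

Lemma exists_linopt A B E : wf_inst P A B E -> exists y zE zV, linopt P A B E y zE zV.
Proof.
move=> wfAB.
pose obj (S : {set T}) := \sum_(v in A :|: B) rvec P A B v * ind R S v.
pose feasible (S : {set T}) := `[< primal_feas A B E (ind R S) >].
have feas0 : feasible finset.set0.
  apply/asboolP/(pfeasP wfAB); rewrite /ind; split=> [v _|e _].
    by rewrite finset.in_set0 lexx ler01.
  by rewrite !finset.in_set0 addr0.
have [S /asboolP feasS Smax] := @arg_maxP _ _ _ finset.set0 feasible obj feas0.
have [zE [zV [dfeas dopt]]] := exists_dual wfAB.
exists (ind R S), zE, zV; split.
  by move=> v _; rewrite /ind; case: ifP => _; [right|left].
split=> //; split=> // y' feas'.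
have [S' feasS' le_obj] := rounding wfAB (rvec P A B) feas'.
by apply: le_trans le_obj (Smax S' _); exact/asboolP.
Qed.

Lemma split_card A B E (y : T -> R) : wf_inst P A B E -> split_cond P A B y ->
  (#|plus_part y A :|: minus_part y B| < #|A :|: B|)%N.
Proof.
move=> wfAB ysplit; have [_ pB] := split_plus_pos wfAB ysplit.
have [b bB] : exists b, b \in plus_part y B.
  apply/finset.set0Pn; apply: contraTneq pB => ->.
  by rewrite /Pw big_set0 ltxx.
apply: proper_card; apply/properP; split.
  by rewrite (calls_cover y A B) finset.subsetUl.
exists b; first by rewrite finset.in_setU (fintype.subsetP (plus_sub y B) b bB) orbT.
move: bB; rewrite in_plus_part => /andP[bB yb].
by rewrite finset.in_setU in_plus_part in_minus_part bB yb (disjointFl (wf_disjoint wfAB) bB).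
Qed.

Lemma optprob_terminates_card n A B E : (#|A :|: B| < n)%N -> wf_inst P A B E ->
  optprob_terminates P A B E.
Proof.
elim: n A B E => [|n IH] A B E lt_card wfAB; first by rewrite ltn0 in lt_card.
constructor; first exact: exists_linopt wfAB.
  move=> y zE zV _ ysplit; apply: (IH _ _ _ _ (wf_restr wfAB (plus_sub y A) (minus_sub y B))).
  by rewrite -ltnS (leq_ltn_trans (split_card wfAB ysplit) lt_card).
move=> y zE zV _ ysplit; apply: (IH _ _ _ _ (wf_restr wfAB (minus_sub y A) (plus_sub y B))).
have ysplit' : split_cond P B A y by rewrite split_cond_flip.
have := split_card (wf_flip wfAB) ysplit'; rewrite [B :|: A]finset.setUC => lt_split.
by rewrite finset.setUC -ltnS (leq_ltn_trans lt_split lt_card).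
Qed.

End Termination.

Theorem theorem3 (R : realType) (T : finType) (V1 Vm1 : {set T})
    (E : {set T * T}) (P : T -> R) :
  [disjoint V1 & Vm1] ->
  E \subset finset.setX V1 Vm1 ->
  (forall v, v \in V1 :|: Vm1 -> 0 < P v) ->
  optprob_terminates P V1 Vm1 E /\
  (forall q zE zV, optprob P V1 Vm1 E q zE zV -> unique_minimizer P V1 Vm1 E q).
Proof.
move=> dV sE Ppos; have wfV : wf_inst P V1 Vm1 E by split.
split; first exact: optprob_terminates_card (ltnSn _) wfV.
by move=> q zE zV run; apply: kkt_unique_minimizer wfV (kkt_optprob run wfV).
Qed.
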